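(* Let $n \in\mathbb N$ and $F\colon\mathbb R_+^n\to \mathbb R_+$ with $F\in P_{MB}^n$. Then $F$ is quasi-subadditive, i.e. there exists $s\geqslant1$ with $F(\mathbf a+\mathbf b)\leqslant s(F(\mathbf a)+F(\mathbf b))$ for all $\mathbf a,\mathbf b\in\mathbb R_+^n$.
   Context: $\mathbb R_+=[0,\infty)$; $\mathbf a+\mathbf b$ is the coordinatewise sum. A b-metric on $X$ is $d\colon X^2\to\mathbb R_+$ with $d(x,y)=0\iff x=y$, $d(x,y)=d(y,x)$, and for some $K\geqslant1$, $d(x,z)\leqslant K(d(x,y)+d(y,z))$ for all $x,y,z$; a metric is a b-metric with $K=1$. $P^n_{MB}$ is the set of $F\colon\mathbb R_+^n\to\mathbb R_+$ such that for every collection of metric spaces $(X_i,d_i)$, $i=1,\dots,n$, the function $D(\mathbf x,\mathbf y)=F(d_1(x_1,y_1),\dots,d_n(x_n,y_n))$ on $\prod_{i=1}^nX_i$ is a b-metric. *)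

From Stdlib Require Import Reals.
From mathcomp Require Import all_boot.
Open Scope R_scope.

Definition is_metric (X : Type) (d : X -> X -> R) : Prop :=
  (forall x y, 0 <= d x y) /\
  (forall x y, d x y = 0 <-> x = y) /\
  (forall x y, d x y = d y x) /\
  (forall x y z, d x z <= d x y + d y z).

Definition is_bmetric (X : Type) (d : X -> X -> R) : Prop :=
  (forall x y, 0 <= d x y) /\
  (forall x y, d x y = 0 <-> x = y) /\
  (forall x y, d x y = d y x) /\
  (exists K, 1 <= K /\ forall x y z, d x z <= K * (d x y + d y z)).

Definition nonneg_vec (n : nat) (a : 'I_n -> R) : Prop := forall i, 0 <= a i.

Definition vadd (n : nat) (a b : 'I_n -> R) : 'I_n -> R := fun i => a i + b i.

Definition P_MB (n : nat) (F : ('I_n -> R) -> R) : Prop :=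
  forall (X : 'I_n -> Type) (d : forall i, X i -> X i -> R),
    (forall i, @is_metric (X i) (d i)) ->
    @is_bmetric (forall i, X i) (fun (x y : forall i, X i) => F (fun i => d i (x i) (y i))).

From Stdlib Require Import Reals FunctionalExtensionality.
From mathcomp Require Import all_boot.
Open Scope R_scope.

(* Take every factor to be the real line with d(x, y) = |x - y|.  In the
   product, the points 0, a and a + b have coordinatewise distances a, b and
   a + b, so the relaxed triangle inequality of the b-metric through a is
   exactly F(a + b) <= K (F a + F b). *)

Lemma is_metric_Rdist : is_metric R Rdist.
Proof.
split; [|split; [|split]].
- by move=> x y; apply/Rge_le/Rdist_pos.
- exact: Rdist_refl.
- exact: Rdist_sym.
- by move=> x y z; apply: Rdist_tri.
Qed.

Lemma Rdist_0_nonneg (a : R) : 0 <= a -> Rdist 0 a = a.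
Proof. by move=> a_ge0; rewrite Rdist_sym /Rdist Rminus_0_r Rabs_pos_eq. Qed.

Lemma Rdist_addr (a b : R) : 0 <= b -> Rdist a (a + b) = b.
Proof.
move=> b_ge0; rewrite /Rdist (_ : a - (a + b) = - b); last by ring.
by rewrite Rabs_Ropp Rabs_pos_eq.
Qed.

Theorem lemma3p4 (n : nat) (F : ('I_n -> R) -> R)
  (HF : forall a, @nonneg_vec n a -> 0 <= F a)
  (HP : @P_MB n F) :
  exists s, 1 <= s /\
    forall a b, @nonneg_vec n a -> @nonneg_vec n b ->
      F (@vadd n a b) <= s * (F a + F b).
Proof.
have [_ [_ [_ [K [K_ge1 triangle]]]]] :=
  HP (fun=> R) (fun=> Rdist) (fun=> is_metric_Rdist).
exists K; split=> // a b a_ge0 b_ge0.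
have := triangle (fun=> 0) a (vadd n a b).
have ab_ge0 i : 0 <= vadd n a b i by apply: Rplus_le_le_0_compat.
have dist_0 (c : 'I_n -> R) : nonneg_vec n c -> (fun i => Rdist 0 (c i)) = c.
  by move=> c_ge0; apply: functional_extensionality => i; apply: Rdist_0_nonneg.
have dist_ab : (fun i => Rdist (a i) (vadd n a b i)) = b.
  by apply: functional_extensionality => i; apply: Rdist_addr.
by rewrite dist_0 // dist_0 // dist_ab.
Qed.
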